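(* Let $r\ge 2$ and $m$ be integers with $0\le 2m\le r$, and put $n=2r-4m$. Let $\{x_0,\dots,x_r\}$ be the basis of $S^r(\mathbb{C}^2)$ and $\{w_0,\dots,w_n\}$ the basis of $S^n(\mathbb{C}^2)$ described in the context. Let $q_0$ be a bilinear form on $S^r(\mathbb{C}^2)$ such that for all $0\le i,j\le r$, $$0=(i+1)\,q_0(x_{i+1},x_j)+(j+1)\,q_0(x_i,x_{j+1}),\qquad (2r-2i-2j-n)\,q_0(x_i,x_j)=0 .$$ Then there exists a unique $\mathfrak{sl}_2(\mathbb{C})$-equivariant linear map $f:S^r(\mathbb{C}^2)\otimes S^r(\mathbb{C}^2)\to S^n(\mathbb{C}^2)$ whose component along $w_0$ is $q_0$, i.e. $f(u\otimes v)=\sum_{k=0}^n q_k(u,v)\,w_k$ for bilinear forms $q_k$ with $q_0$ the given one. Moreover, $f$ is symmetric if and only if $q_0$ is symmetric.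
   Context: $\mathfrak{sl}_2(\mathbb{C})$ has basis $X=\begin{pmatrix}0&1\\0&0\end{pmatrix}$, $H=\begin{pmatrix}1&0\\0&-1\end{pmatrix}$, $Y=\begin{pmatrix}0&0\\1&0\end{pmatrix}$, acting on the irreducible modules $S^d(\mathbb{C}^2)$ (binary forms of degree $d$). Let $x_0\in S^r(\mathbb{C}^2)$ be a highest weight vector and $x_i=Y^ix_0/i!$ for $0\le i\le r$; then $Yx_i=(i+1)x_{i+1}$, $Xx_i=(r-i+1)x_{i-1}$, $Hx_i=(r-2i)x_i$, with the convention $x_{-1}=x_{r+1}=0$ (and $x_l=0$ for $l\notin[0,r]$). Similarly $w_0\in S^n(\mathbb{C}^2)$ is a highest weight vector and $w_k=Y^kw_0/k!$, $0\le k\le n$. *)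

(* The scalar field C is taken to be R[i] for an arbitrary
   realType R (complete archimedean ordered field, i.e. R ~ the reals),
   so C ~ the complex numbers. *)
From mathcomp Require Import all_boot all_algebra.
From mathcomp Require Import reals complex.
Set Implicit Arguments. Unset Strict Implicit. Unset Printing Implicit Defensive.
Import GRing.Theory.
Local Open Scope ring_scope.

Section Sl2Defs.
Variable C : fieldType.

(* S^d(C^2) is represented by coordinate column vectors 'cV_(d.+1) in the
   basis x_0, ..., x_d (x_i = Y^i x_0 / i!). *)

(* basis vector x_i of S^d, with the convention x_l = 0 for l outside [0,d] *)
Definition xb (d i : nat) : 'cV[C]_(d.+1) :=
  if (i <= d)%N then delta_mx (inord i) 0 else 0.

Arguments xb d i : clear implicits.

(* An element A = [[a, b], [c, -a]] of sl_2 (2x2 matrix with trace 0) equals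
   b X + a H + c Y.  Its action on S^d in the basis x_i:
     X x_j = (d-j+1) x_{j-1},  H x_j = (d-2j) x_j,  Y x_j = (j+1) x_{j+1}.
   rho d A is the matrix of this action (column j = image of x_j). *)
Definition rho (d : nat) (A : 'M[C]_2) : 'M[C]_(d.+1) :=
  \matrix_(i < d.+1, j < d.+1)
    ((if (i.+1 == j :> nat) then A 0 1 * (d - j + 1)%:R else 0)
   + (if (i == j :> nat) then A 0 0 * ((d%:Z - 2 * j%:Z)%:~R) else 0)
   + (if (i == j.+1 :> nat) then A 1 0 * (j + 1)%:R else 0)).

Arguments rho d A : clear implicits.

Definition sl2 (A : 'M[C]_2) : bool := \tr A == 0.

(* S^r (x) S^r is identified with (r+1)x(r+1) matrices:
   T corresponds to sum_{i,j} T i j x_i (x) x_j, and u (x) v to u v^T.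
   A linear map f : S^r (x) S^r -> S^n is a matrix
   'M_(n.+1, r.+1 * r.+1) acting on mxvec-coordinates. *)
Definition tvec (r : nat) (T : 'M[C]_(r.+1)) : 'cV[C]_(r.+1 * r.+1) :=
  (mxvec T)^T.

Definition tens (r : nat) (u v : 'cV[C]_(r.+1)) : 'cV[C]_(r.+1 * r.+1) :=
  tvec (u *m v^T).

(* action of A on the tensor product: Z(u (x) v) = Zu (x) v + u (x) Zv *)
Definition rho_tens (r : nat) (A : 'M[C]_2) (T : 'M[C]_(r.+1)) : 'M[C]_(r.+1) :=
  rho r A *m T + T *m (rho r A)^T.

Arguments rho_tens r A T : clear implicits.

Definition equivariant (r n : nat) (f : 'M[C]_(n.+1, r.+1 * r.+1)) : Prop :=
  forall A : 'M[C]_2, sl2 A ->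
    forall T : 'M[C]_(r.+1), f *m tvec (rho_tens r A T) = rho n A *m (f *m tvec T).

Definition bform (r : nat) (Q : 'M[C]_(r.+1)) (u v : 'cV[C]_(r.+1)) : C :=
  (u^T *m Q *m v) 0 0.

(* k-th component q_k(u,v) of f(u (x) v) = sum_k q_k(u,v) w_k *)
Definition wcomp (r n : nat) (f : 'M[C]_(n.+1, r.+1 * r.+1)) (k : 'I_n.+1)
  (u v : 'cV[C]_(r.+1)) : C := (f *m tens u v) k 0.

Definition sym_map (r n : nat) (f : 'M[C]_(n.+1, r.+1 * r.+1)) : Prop :=
  forall u v : 'cV[C]_(r.+1), f *m tens u v = f *m tens v u.

Definition sym_form (r : nat) (Q : 'M[C]_(r.+1)) : Prop :=
  forall u v : 'cV[C]_(r.+1), bform Q u v = bform Q v u.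

End Sl2Defs.


Arguments xb {C} d i.
Arguments rho {C} d A.
Arguments rho_tens {C} r A T.
Arguments bform {C r} Q u v.
Arguments wcomp {C r n} f k u v.
Arguments equivariant {C r n} f.
Arguments sym_map {C r n} f.
Arguments sym_form {C r} Q.
Arguments tvec {C r} T.
Arguments tens {C r} u v.

From mathcomp Require Import all_boot all_algebra.
From mathcomp Require Import reals complex.
From mathcomp Require Import ring zify.
Set Implicit Arguments. Unset Strict Implicit. Unset Printing Implicit Defensive.
Import GRing.Theory Num.Theory.
Local Open Scope ring_scope.

(* The two conditions say that q0, viewed as a linear form on S^r (x) S^r, is
   killed by Y and has H-weight n.  Then q0 X^k has weight n - 2k, and
   q0 X^(k+1) Y = (k+1)(n-k) q0 X^k.  Since the weights of S^r (x) S^r are at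
   least -2r, q0 X^k vanishes for large k, and descending along Y it vanishes
   for every k > n.  Equivariance under X forces the k-th component of f to be
   q0 X^k / (n (n-1) ... (n-k+1)), which gives uniqueness; conversely, the
   relations above are exactly the equivariance of this f under X, H and Y,
   which span sl_2.  Symmetry of q0 propagates to every q0 X^k because X acts
   on u (x) v as Xu (x) v + u (x) Xv. *)

Definition Xm {C : fieldType} : 'M[C]_2 := delta_mx 0 1.
Definition Hm {C : fieldType} : 'M[C]_2 := delta_mx 0 0 - delta_mx 1 1.
Definition Ym {C : fieldType} : 'M[C]_2 := delta_mx 1 0.

Section SymmetricPower.
Variables (C : fieldType) (d : nat).

Lemma xbE j (i : 'I_d.+1) :
  xb (C:=C) d j i 0 = if (j <= d)%N then (i == j :> nat)%:R else 0.
Proof.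
rewrite /xb; case: ifP => hj; last by rewrite mxE.
rewrite mxE eqxx andbT.
suff -> : (i == inord j) = (i == j :> nat) by [].
by apply/idP/idP => /eqP eq_ij; apply/eqP;
  [rewrite eq_ij inordK | apply/val_inj; rewrite /= inordK].
Qed.

Lemma mul_xbE p (M : 'M[C]_(p, d.+1)) j i :
  (M *m xb d j) i 0 = if (j <= d)%N then M i (inord j) else 0.
Proof.
rewrite /xb; case: ifP => hj; last by rewrite mulmx0 mxE.
by rewrite -colE mxE.
Qed.

Lemma trmx_mul_xbE (M : 'M[C]_d.+1) j i :
  (M^T *m xb d j) i 0 = if (j <= d)%N then M (inord j) i else 0.
Proof. by rewrite mul_xbE mxE. Qed.

Lemma mx_xbP (M N : 'M[C]_d.+1) :
  (forall j, (j <= d)%N -> M *m xb d j = N *m xb d j) -> M = N.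
Proof.
move=> eqMN; apply/matrixP => i j; move/matrixP: (eqMN j (ltn_ord j)) => /(_ i 0).
by rewrite !mul_xbE -ltnS ltn_ord inord_val.
Qed.

Lemma trmx_xb_mul p (M : 'M[C]_(d.+1, p)) k :
  (xb d k)^T *m M = if (k <= d)%N then row (inord k) M else 0.
Proof.
rewrite /xb; case: ifP => _; first by rewrite trmx_delta -rowE.
by rewrite trmx0 mul0mx.
Qed.

Lemma row_mul_xb p (A : 'M[C]_d.+1) (M : 'M[C]_(d.+1, p)) (k : 'I_d.+1) :
  row k (A *m M) = (A^T *m xb d k)^T *m M.
Proof. by rewrite trmx_mul trmxK -mulmxA trmx_xb_mul -ltnS ltn_ord inord_val row_mul. Qed.

Lemma rho_sl2E (A : 'M[C]_2) :
  rho d A = A 0 1 *: rho d Xm + A 0 0 *: rho d Hm + A 1 0 *: rho d Ym.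
Proof.
apply/matrixP => i j; rewrite !mxE /Xm /Hm /Ym ?mxE /= !subr0 !mul1r !mul0r.
by case: (i.+1 == j :> nat); case: (i == j :> nat); case: (i == j.+1 :> nat);
  rewrite /= ?mulr0 ?addr0 ?add0r; ring.
Qed.

Lemma sl2Xm : sl2 (@Xm C).
Proof. by rewrite /sl2 /Xm /mxtrace !big_ord_recl big_ord0 !mxE /= !addr0. Qed.

Local Ltac simpr0 := rewrite /= ?oppr0 ?subr0 ?mulr0n ?mulr1n ?mul0r ?mul1r
  ?mulr0 ?mulr1 ?if_same ?addr0 ?add0r.

Lemma rhoHE (i j : 'I_d.+1) :
  rho d Hm i j = if (i == j :> nat) then d%:R - 2 * j%:R else 0 :> C.
Proof. by rewrite mxE /Hm !mxE /= intrB intrM; do ![case: ifP => _]; ring. Qed.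

Lemma rhoX_xbS j : rho d Xm *m xb d j.+1 = (d - j)%:R *: xb (C:=C) d j.
Proof.
apply/matrixP => i k; rewrite (ord1 k) mul_xbE !mxE xbE; simpr0.
case: (ltnP j d) => hj; last first.
  by rewrite (_ : d - j = 0)%N ?mul0r //; lia.
rewrite (ltnW hj) inordK // eqSS.
by case: (i == j :> nat); simpr0; rewrite // (_ : d - j.+1 + 1 = d - j)%N //; lia.
Qed.

Lemma rhoX_xb0 : rho d Xm *m xb (C:=C) d 0 = 0.
Proof. by apply/matrixP => i k; rewrite (ord1 k) mul_xbE !mxE inordK //; simpr0. Qed.

Lemma rhoH_xb j : rho d Hm *m xb d j = (d%:R - 2 * j%:R) *: xb (C:=C) d j.
Proof.
apply/matrixP => i k; rewrite (ord1 k) mul_xbE [RHS]mxE xbE.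
case: ifP => hj; simpr0 => //.
by rewrite rhoHE inordK //; case: (i == j :> nat); simpr0.
Qed.

Lemma rhoY_xb j : rho d Ym *m xb d j = (j + 1)%:R *: xb (C:=C) d j.+1.
Proof.
apply/matrixP => i k; rewrite (ord1 k) mul_xbE !mxE xbE; simpr0.
case: (ltnP j d) => hj.
  by rewrite (ltnW hj) inordK 1?ltnW //; case: (i == j.+1 :> nat); simpr0.
rewrite mulr0; case: ifP => // hjd; rewrite inordK // ifN //.
by apply/eqP => eq_i; have := ltn_ord i; lia.
Qed.

(* [(rho d Z)^T *m xb d k] is the transposed k-th row of [rho d Z]; these rows
   relate the components of an equivariant map with values in S^d. *)
Lemma rhoXt_xb j : (rho d Xm)^T *m xb d j = (d - j)%:R *: xb (C:=C) d j.+1.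
Proof.
apply/matrixP => i k; rewrite (ord1 k) trmx_mul_xbE !mxE xbE; simpr0.
case: (ltnP j d) => hj.
  rewrite (ltnW hj) inordK 1?ltnW // [(_ == j.+1 :> nat)]eq_sym.
  by case: eqP => [<-|]; simpr0; rewrite // (_ : d - j.+1 + 1 = d - j)%N //; lia.
rewrite mulr0; case: ifP => // hjd; rewrite inordK // ifN //.
by apply/eqP => eq_i; have := ltn_ord i; lia.
Qed.

Lemma rhoHt_xb j : (rho d Hm)^T *m xb d j = (d%:R - 2 * j%:R) *: xb (C:=C) d j.
Proof.
apply/matrixP => i k; rewrite (ord1 k) trmx_mul_xbE [RHS]mxE xbE.
case: ifP => hj; simpr0 => //.
rewrite rhoHE inordK // eq_sym.
by case: eqP => [->|]; simpr0.
Qed.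

Lemma rhoYt_xbS j : (j < d)%N ->
  (rho d Ym)^T *m xb d j.+1 = (j + 1)%:R *: xb (C:=C) d j.
Proof.
move=> hj; apply/matrixP => i k; rewrite (ord1 k) trmx_mul_xbE !mxE xbE; simpr0.
rewrite hj (ltnW hj) inordK // eqSS eq_sym.
by case: eqP => [->|]; simpr0.
Qed.

Lemma rhoYt_xb0 : (rho d Ym)^T *m xb (C:=C) d 0 = 0.
Proof. by apply/matrixP => i k; rewrite (ord1 k) trmx_mul_xbE !mxE inordK //; simpr0. Qed.

Lemma rho_commXY :
  rho d Xm *m rho d Ym - rho d Ym *m rho d Xm = rho (C:=C) d Hm.
Proof.
apply: mx_xbP => j hj; rewrite mulmxBl -!mulmxA rhoY_xb rhoH_xb -scalemxAr rhoX_xbS.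
case: j hj => [|j] hj.
  by rewrite rhoX_xb0 mulmx0 subr0 scalerA subn0 add0n mul1r mulr0 subr0.
rewrite (rhoX_xbS j) -scalemxAr rhoY_xb !scalerA -scalerBl; congr (_ *: _).
rewrite !natrB; [|lia|lia].
by rewrite -[j.+1]addn1 !natrD; ring.
Qed.

Lemma rho_commHX :
  rho d Hm *m rho d Xm - rho d Xm *m rho d Hm = 2%:R *: rho (C:=C) d Xm.
Proof.
apply: mx_xbP => j hj; rewrite mulmxBl -!mulmxA rhoH_xb -scalemxAr -scalemxAl.
case: j hj => [|j] hj; first by rewrite !rhoX_xb0 mulmx0 !scaler0 subrr.
rewrite !rhoX_xbS -scalemxAr rhoH_xb !scalerA -scalerBl; congr (_ *: _).
rewrite -[j.+1]addn1 !natrD; ring.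
Qed.

End SymmetricPower.

Section TensorSquare.
Variables (C : fieldType) (r : nat).
Local Notation N := (r.+1 * r.+1)%N.

Definition tensor_act (P : 'M[C]_r.+1) : 'M[C]_N := (lin_mulmx P + lin_mulmxr P^T)^T.

Lemma tvecD (A B : 'M[C]_r.+1) : tvec (A + B) = tvec A + tvec B.
Proof. by rewrite /tvec !raddfD. Qed.

Lemma tvecB (A B : 'M[C]_r.+1) : tvec (A - B) = tvec A - tvec B.
Proof. by rewrite /tvec !raddfB. Qed.

Lemma tvecZ a (A : 'M[C]_r.+1) : tvec (a *: A) = a *: tvec A.
Proof. by rewrite /tvec !linearZ. Qed.

Lemma tensor_act_tvec P T : tensor_act P *m tvec T = tvec (P *m T + T *m P^T).
Proof.
rewrite /tensor_act /tvec -trmx_mul mulmxDr !mul_vec_lin /=.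
by rewrite [mxvec (_ + _)]raddfD.
Qed.

Lemma tensor_act_tens P (u v : 'cV[C]_r.+1) :
  tensor_act P *m tens u v = tens (P *m u) v + tens u (P *m v).
Proof. by rewrite /tens tensor_act_tvec -tvecD trmx_mul !mulmxA. Qed.

Lemma tensZl a (u v : 'cV[C]_r.+1) : tens (a *: u) v = a *: tens u v.
Proof. by rewrite /tens -tvecZ scalemxAl. Qed.

Lemma tensZr a (u v : 'cV[C]_r.+1) : tens u (a *: v) = a *: tens u v.
Proof. by rewrite /tens -tvecZ linearZ /= scalemxAr. Qed.

Lemma mx_tens_xbP p (M M' : 'M[C]_(p, N)) :
  (forall a b, (a <= r)%N -> (b <= r)%N ->
     M *m tens (xb r a) (xb r b) = M' *m tens (xb r a) (xb r b)) -> M = M'.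
Proof.
move=> eqMM'; apply/matrixP => i k; case/mxvec_indexP: k => a b.
have ha : (a <= r)%N := ltn_ord a; have hb : (b <= r)%N := ltn_ord b.
move: (eqMM' a b ha hb); rewrite /tens /xb ha hb !inord_val trmx_delta mul_delta_mx.
rewrite /tvec mxvec_delta trmx_delta.
by rewrite -!colE => /matrixP/(_ i 0); rewrite !mxE.
Qed.

Lemma mx_tvecP p (M M' : 'M[C]_(p, N)) :
  (forall T, M *m tvec T = M' *m tvec T) -> M = M'.
Proof. by move=> eqMM'; apply: mx_tens_xbP => a b _ _; apply: eqMM'. Qed.

Lemma tensor_actD P Q : tensor_act (P + Q) = tensor_act P + tensor_act Q.
Proof.
apply: mx_tvecP => T; rewrite mulmxDl !tensor_act_tvec -tvecD; congr tvec.
by rewrite raddfD /= mulmxDl mulmxDr addrACA.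
Qed.

Lemma tensor_actZ a P : tensor_act (a *: P) = a *: tensor_act P.
Proof.
apply: mx_tvecP => T; rewrite -scalemxAl !tensor_act_tvec -tvecZ; congr tvec.
by rewrite linearZ /= -scalemxAl -scalemxAr scalerDr.
Qed.

Lemma tensor_act_comm P Q :
  tensor_act P *m tensor_act Q - tensor_act Q *m tensor_act P
  = tensor_act (P *m Q - Q *m P).
Proof.
apply: mx_tvecP => T; rewrite mulmxBl -!mulmxA !tensor_act_tvec.
rewrite -tvecB; congr tvec.
rewrite !mulmxDr !mulmxDl !mulmxA raddfB /= !trmx_mul mulNmx mulmxBr !mulmxA.
have rearrange (V : zmodType) (a b c d e f : V) :
    a + b + (c + d) - (e + c + (b + f)) = a - e + (d - f).
  rewrite [c + d]addrC [e + c]addrC [a + b + _]addrACA [c + e + _]addrACA.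
  by rewrite [c + b]addrC addrKA [RHS]addrACA opprD.
exact: rearrange.
Qed.

Local Notation Xt := (tensor_act (rho r Xm)).
Local Notation Ht := (tensor_act (rho r Hm)).
Local Notation Yt := (tensor_act (rho r Ym)).

Lemma tensor_act_commXY : Xt *m Yt = Yt *m Xt + Ht.
Proof. by rewrite -rho_commXY -tensor_act_comm addrC subrK. Qed.

Lemma tensor_act_commXH : Xt *m Ht = Ht *m Xt - 2%:R *: Xt.
Proof. by rewrite -tensor_actZ -rho_commHX -tensor_act_comm opprB addrC subrK. Qed.

Lemma equivariant_sl2 n (g : 'M[C]_(n.+1, N)) :
    g *m Xt = rho n Xm *m g -> g *m Ht = rho n Hm *m g ->
    g *m Yt = rho n Ym *m g ->
  equivariant g.
Proof.
move=> gX gH gY A _ T.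
have gA : g *m tensor_act (rho r A) = rho n A *m g.
  rewrite (rho_sl2E r A) (rho_sl2E n A) !tensor_actD !tensor_actZ !mulmxDr !mulmxDl.
  by rewrite -!scalemxAr -!scalemxAl gX gH gY.
by rewrite /rho_tens -tensor_act_tvec mulmxA gA mulmxA.
Qed.

Lemma equivariantX n (g : 'M[C]_(n.+1, N)) :
  equivariant g -> g *m Xt = rho n Xm *m g.
Proof.
move=> g_eqv; apply: mx_tvecP => T; rewrite -!mulmxA tensor_act_tvec.
exact: g_eqv (sl2Xm C) T.
Qed.

Lemma wcomp0_row p (g : 'M[C]_(p.+1, N)) u v :
  wcomp g ord0 u v = (row 0 g *m tens u v) 0 0.
Proof. by rewrite -row_mul [RHS]mxE. Qed.

End TensorSquare.

Lemma natr_ffactS_ratio (C : numFieldType) n k :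
  (k < n)%N -> (n - k)%:R / (n ^_ k.+1)%:R = (n ^_ k)%:R^-1 :> C.
Proof.
move=> k_lt_n; rewrite ffactnSr natrM invfM mulrCA divff ?mulr1 //.
by rewrite pnatr_eq0 subn_eq0 -ltnNge.
Qed.

Section EquivariantExtension.
Variables (C : numFieldType) (r n : nat) (Q0 : 'M[C]_r.+1).
Hypothesis Q0_Y : forall i j : nat, (i <= r)%N -> (j <= r)%N ->
  0 = (i + 1)%:R * bform Q0 (xb r i.+1) (xb r j)
      + (j + 1)%:R * bform Q0 (xb r i) (xb r j.+1).
Hypothesis Q0_H : forall i j : nat, (i <= r)%N -> (j <= r)%N ->
  ((2 * r%:Z - 2 * i%:Z - 2 * j%:Z - n%:Z)%:~R : C)
    * bform Q0 (xb r i) (xb r j) = 0.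

Local Notation N := (r.+1 * r.+1)%N.
Local Notation Xt := (tensor_act (rho r (@Xm C))).
Local Notation Ht := (tensor_act (rho r (@Hm C))).
Local Notation Yt := (tensor_act (rho r (@Ym C))).

Definition qvec : 'rV[C]_N := mxvec Q0.

Lemma qvec_tens u v : qvec *m tens u v = (bform Q0 u v)%:M.
Proof.
rewrite /bform -mx11_scalar /qvec /tens /tvec -[mxvec Q0]trmxK -trmx_mul.
have := mxvec_dotmul Q0 u^T v^T; rewrite !trmxK => ->.
by rewrite [LHS]mx11_scalar mxE -mx11_scalar.
Qed.

Lemma qvecY : qvec *m Yt = 0.
Proof.
apply: mx_tens_xbP => a b ha hb.
rewrite -mulmxA tensor_act_tens !rhoY_xb tensZl tensZr mulmxDr -!scalemxAr mul0mx.
by rewrite !qvec_tens !scale_scalar_mx -raddfD /= -(Q0_Y ha hb) raddf0.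
Qed.

Lemma qvecH : qvec *m Ht = n%:R *: qvec.
Proof.
apply: mx_tens_xbP => a b ha hb.
rewrite -mulmxA tensor_act_tens !rhoH_xb tensZl tensZr mulmxDr -!scalemxAr -scalemxAl.
rewrite !qvec_tens !scale_scalar_mx -raddfD /=; congr (_%:M).
move: (Q0_H ha hb); rewrite !intrB !intrM => weight.
by apply/eqP; rewrite -subr_eq0 -weight; apply/eqP; ring.
Qed.

Fixpoint qvecX k : 'rV[C]_N := if k is k'.+1 then qvecX k' *m Xt else qvec.

Lemma qvecXH k : qvecX k *m Ht = (n%:R - 2 * k%:R) *: qvecX k.
Proof.
elim: k => [|k IHk] /=; first by rewrite qvecH mulr0 subr0.
rewrite -mulmxA tensor_act_commXH mulmxBr mulmxA IHk -scalemxAl -scalemxAr -scalerBl.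
by congr (_ *: _); rewrite -[k.+1]addn1 natrD; ring.
Qed.

Lemma qvecXY k : qvecX k.+1 *m Yt = (k.+1%:R * (n%:R - k%:R)) *: qvecX k.
Proof.
elim: k => [|k IHk].
  rewrite /= -mulmxA tensor_act_commXY mulmxDr mulmxA qvecY mul0mx add0r qvecH.
  by rewrite mul1r subr0.
rewrite -[qvecX k.+2]/(qvecX k.+1 *m Xt) -mulmxA tensor_act_commXY mulmxDr mulmxA.
rewrite IHk -scalemxAl.
rewrite -[qvecX k *m Xt]/(qvecX k.+1) qvecXH -scalerDl; congr (_ *: _).
by rewrite -[k.+1]addn1 !natrD; ring.
Qed.

(* The H-weights of S^r (x) S^r are the integers r - 2a + r - 2b >= -2r. *)
Lemma qvecX_low_weight_eq0 k : (n + 2 * r < 2 * k)%N -> qvecX k = 0.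
Proof.
move=> k_big; apply: mx_tens_xbP => a b ha hb; rewrite mul0mx.
have := congr1 (mulmx^~ (tens (xb r a) (xb r b))) (qvecXH k).
rewrite /= -mulmxA tensor_act_tens !rhoH_xb tensZl tensZr mulmxDr -!scalemxAr.
rewrite -scalemxAl -scalerDl => /eqP; rewrite -subr_eq0 -scalerBl scaler_eq0.
have -> : r%:R - 2 * a%:R + (r%:R - 2 * b%:R) - (n%:R - 2 * k%:R)
          = (2 * k + 2 * r)%:R - (n + 2 * a + 2 * b)%:R :> C.
  by rewrite !natrD ?natrM; ring.
by rewrite subr_eq0 eqr_nat => /orP[/eqP|/eqP //]; lia.
Qed.

Lemma qvecX_eq0 k : (n < k)%N -> qvecX k = 0.
Proof.
move=> n_lt_k.
have down t : qvecX (k + t).+1 = 0 -> qvecX (k + t) = 0.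
  move=> vanish; apply/eqP; move/eqP: (qvecXY (k + t)).
  rewrite vanish mul0mx eq_sym scaler_eq0 mulf_eq0 pnatr_eq0 /= subr_eq0 eqr_nat.
  by case/orP => [/eqP|//]; lia.
suff: forall t, qvecX (k + t) = 0 -> qvecX k = 0.
  by apply; apply: (qvecX_low_weight_eq0 (k := k + (n + 2 * r))); lia.
by elim=> [|t IHt]; rewrite ?addn0 // addnS => /down.
Qed.

Definition fQ : 'M[C]_(n.+1, N) := \matrix_(k < n.+1) ((n ^_ k)%:R^-1 *: qvecX k).

Lemma row_fQ (k : 'I_n.+1) : row k fQ = (n ^_ k)%:R^-1 *: qvecX k.
Proof. by rewrite rowK. Qed.

Lemma fQ_X : fQ *m Xt = rho n Xm *m fQ.
Proof.
apply/row_matrixP => k; rewrite row_mul row_fQ -scalemxAl row_mul_xb rhoXt_xb.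
rewrite linearZ /= -scalemxAl trmx_xb_mul; case: ifP => k_lt_n; last first.
  by rewrite scaler0 -[qvecX k *m Xt]/(qvecX k.+1) qvecX_eq0 ?scaler0 //; lia.
by rewrite row_fQ inordK // scalerA natr_ffactS_ratio.
Qed.

Lemma fQ_H : fQ *m Ht = rho n Hm *m fQ.
Proof.
apply/row_matrixP => k; rewrite row_mul row_fQ -scalemxAl qvecXH row_mul_xb rhoHt_xb.
rewrite [in RHS]linearZ /= -scalemxAl trmx_xb_mul -ltnS ltn_ord inord_val row_fQ.
by rewrite !scalerA mulrC.
Qed.

Lemma fQ_Y : fQ *m Yt = rho n Ym *m fQ.
Proof.
apply/row_matrixP => k; rewrite row_mul row_fQ -scalemxAl row_mul_xb.
case: k => [[|k] k_lt_n] /=; first by rewrite qvecY rhoYt_xb0 trmx0 mul0mx scaler0.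
rewrite ltnS in k_lt_n.
rewrite qvecXY rhoYt_xbS // [in RHS]linearZ /= -scalemxAl trmx_xb_mul ltnW //.
rewrite row_fQ inordK; last by rewrite ltnS ltnW.
rewrite !scalerA -(natr_ffactS_ratio C k_lt_n) natrB 1?ltnW //; congr (_ *: _).
by rewrite -[k.+1]addn1 natrD; ring.
Qed.

Lemma fQ_equivariant : equivariant fQ.
Proof. exact: equivariant_sl2 fQ_X fQ_H fQ_Y. Qed.

Lemma fQ_wcomp0 u v : wcomp fQ ord0 u v = bform Q0 u v.
Proof. by rewrite wcomp0_row row_fQ ffactn0 invr1 scale1r qvec_tens mxE eqxx mulr1n. Qed.

Lemma equivariant_eq_fQ g :
  equivariant g -> (forall u v, wcomp g ord0 u v = bform Q0 u v) -> g = fQ.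
Proof.
move=> /equivariantX gX g_wcomp0.
have row0_g : row 0 g = qvec.
  apply: mx_tens_xbP => a b _ _.
  by rewrite qvec_tens [LHS]mx11_scalar -wcomp0_row g_wcomp0.
suff row_g k : (k <= n)%N -> row (inord k) g = (n ^_ k)%:R^-1 *: qvecX k.
  by apply/row_matrixP => k; rewrite row_fQ -row_g ?inord_val // -ltnS.
elim: k => [_|k IHk k_lt_n].
  rewrite ffactn0 invr1 scale1r /= -row0_g; congr row.
  by apply: val_inj; rewrite /= inordK.
have := congr1 (row (inord k)) gX.
rewrite row_mul (IHk (ltnW k_lt_n)) row_mul_xb (inordK (ltnW k_lt_n)).
rewrite rhoXt_xb linearZ /= -scalemxAl trmx_xb_mul k_lt_n -scalemxAl => X_step.
have nk_neq0 : (n - k)%:R != 0 :> C by rewrite pnatr_eq0; lia.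
by apply: (scalerI nk_neq0); rewrite -X_step scalerA natr_ffactS_ratio.
Qed.

Lemma qvecX_sym k u v :
  sym_form Q0 -> qvecX k *m tens u v = qvecX k *m tens v u.
Proof.
move=> Q0_sym; elim: k u v => [|k IHk] u v /=.
  by rewrite !qvec_tens Q0_sym.
by rewrite -!mulmxA !tensor_act_tens !mulmxDr IHk [in RHS]IHk addrC.
Qed.

Lemma fQ_sym : sym_form Q0 -> sym_map fQ.
Proof.
move=> Q0_sym u v; apply/row_matrixP => k.
by rewrite !row_mul row_fQ -!scalemxAl qvecX_sym.
Qed.

Lemma fQ_sym_form : sym_map fQ -> sym_form Q0.
Proof. by move=> fQ_sym_map u v; rewrite -!fQ_wcomp0 /wcomp fQ_sym_map. Qed.

End EquivariantExtension.

Unset Implicit Arguments.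

Theorem mainTheorem1 (R : realType) (r m : nat) (Q0 : 'M[R[i]]_(r.+1)) :
  (2 <= r)%N -> (2 * m <= r)%N ->
  let n := (2 * r - 4 * m)%N in
  (forall i j : nat, (i <= r)%N -> (j <= r)%N ->
     0 = (i + 1)%:R * bform Q0 (xb r i.+1) (xb r j)
         + (j + 1)%:R * bform Q0 (xb r i) (xb r j.+1)) ->
  (forall i j : nat, (i <= r)%N -> (j <= r)%N ->
     ((2 * r%:Z - 2 * i%:Z - 2 * j%:Z - n%:Z)%:~R : R[i])
       * bform Q0 (xb r i) (xb r j) = 0) ->
  (exists! f : 'M[R[i]]_(n.+1, r.+1 * r.+1),
     equivariant f /\ forall u v, wcomp f ord0 u v = bform Q0 u v) /\
  (forall f : 'M[R[i]]_(n.+1, r.+1 * r.+1),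
     equivariant f -> (forall u v, wcomp f ord0 u v = bform Q0 u v) ->
     (sym_map f <-> sym_form Q0)).
Proof.
move=> _ _ n Q0_Y Q0_H; split.
  exists (fQ n Q0); split; first by split; [exact: fQ_equivariant | exact: fQ_wcomp0].
  by move=> g [g_eqv g_wcomp0]; rewrite (equivariant_eq_fQ g_eqv g_wcomp0).
move=> f f_eqv f_wcomp0; rewrite (equivariant_eq_fQ f_eqv f_wcomp0).
by split; [exact: fQ_sym_form | exact: fQ_sym].
Qed.
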